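(* Let $G$ be the reflexive transitive closure of a branching on vertex set $[n]$, with adjacency matrix $M\in\{0,1\}^{n\times n}$ ($M_{j,i}=1$ iff $(i,j)$ is an edge of $G$), accessible only through a matrix-vector oracle $q\mapsto Mq$ over $GF(2)$. Consider the following procedure: initialize $lvl[v]=0$ for all $v\in[n]$ and $q=\mathbf{1}$ (all-ones vector); for $i=0,1,\ldots,\lceil\log_2 n\rceil-1$: query $r:=(Mq)\oplus q$, for every $v$ with $r_v=1$ set $lvl[v]\gets lvl[v]+2^i$, and then set $q\gets q\odot r$ (coordinatewise product). Then this procedure uses $O(\log n)$ queries and at termination $lvl[v]$ equals the level of $v$ for every vertex $v\in[n]$.
   Context: A branching is a forest of rooted trees with all edges directed away from the roots. Its reflexive transitive closure adds an edge $(u,w)$ whenever $w$ is reachable from $u$ (including a loop $(u,u)$ at every vertex). The level of a vertex is its depth in the underlying branching: roots are on level $0$, and children of a vertex on level $\ell$ are on level $\ell+1$. All arithmetic is over $GF(2)$; $\oplus$ is xor and $\odot$ is coordinatewise multiplication (and). *)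

From mathcomp Require Import all_boot all_algebra.
Set Implicit Arguments. Unset Strict Implicit. Unset Printing Implicit Defensive.
Import GRing.Theory.
Local Open Scope ring_scope.

(* A branching on vertex set 'I_n is given by its parent map: par v = Some p
   iff (p, v) is an edge (p is the parent of v); par v = None iff v is a root.
   iterp par k v = k-th ancestor of v (None if it does not exist). *)
Definition iterp n (par : 'I_n -> option 'I_n) (k : nat) (v : 'I_n) : option 'I_n :=
  iter k (obind par) (Some v).

(* Acyclicity: every vertex reaches a root by following parents, so the
   parent map describes a forest of rooted trees with edges directed away from
   the roots. *)
Definition is_branching n (par : 'I_n -> option 'I_n) : Prop :=
  forall v, exists k, iterp par k v = None.

Definition reach n (par : 'I_n -> option 'I_n) (u w : 'I_n) : Prop :=
  exists k, iterp par k w = Some u.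

Definition is_level n (par : 'I_n -> option 'I_n) (v : 'I_n) (l : nat) : Prop :=
  exists r, iterp par l v = Some r /\ par r = None.

(* State of the procedure: (lvl, q, number of oracle queries so far). *)
Definition state n := ({ffun 'I_n -> nat} * 'cV['F_2]_n * nat)%type.

Definition init_state n : state n := ([ffun => 0%N], const_mx 1, 0%N).

Definition step n (O : 'cV['F_2]_n -> 'cV['F_2]_n) (i : nat) (st : state n)
  : state n :=
  let: (lvl, q, cnt) := st in
  let r := O q + q in
  ([ffun v => if r v 0 == 1 then (lvl v + 2 ^ i)%N else lvl v],
   \col_v (q v 0 * r v 0),
   cnt.+1).

Fixpoint run n (O : 'cV['F_2]_n -> 'cV['F_2]_n) (k : nat) : state n :=
  match k with
  | 0 => init_state n
  | k'.+1 => step O k' (run O k')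
  end.

From mathcomp Require Import all_boot all_algebra zify.
Import GRing.Theory.
Set Implicit Arguments. Unset Strict Implicit.

(* Let d(v) be the depth of v.  By induction on i, after i rounds lvl[v] holds
   d(v) mod 2^i and q_v = 1 exactly when d(v) = -1 mod 2^i.  Since M sums over
   the ancestors of v (v included), (Mq + q)_v counts the strict ancestors of
   v at such depths, i.e. the j < d(v) with j = -1 mod 2^i; there are
   d(v) / 2^i of them, so r_v is bit i of d(v).  Adding 2^i r_v to lvl and
   multiplying q by r restores the invariant for i + 1.  A vertex has at most
   n - 1 strict ancestors, so ceil(log2 n) bits suffice. *)

Section Branching.

Variables (n : nat) (par : 'I_n -> option 'I_n).

Lemma iterpD a b v : iterp par (a + b) v = obind (iterp par a) (iterp par b v).
Proof.
rewrite /iterp iterD; case: (iter b _ _) => //=.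
by elim: a => //= a ->.
Qed.

Lemma iterpS k v : iterp par k.+1 v = obind par (iterp par k v).
Proof. by []. Qed.

Lemma iterp_None_mono a b v :
  iterp par a v = None -> a <= b -> iterp par b v = None.
Proof. by move=> Ha /subnK <-; rewrite iterpD Ha. Qed.

Hypothesis par_branching : is_branching par.

Lemma branching_exists_root v : exists k, iterp par k v == None.
Proof. by have [k /eqP] := par_branching v; exists k. Qed.

Definition depth v : nat := (ex_minn (branching_exists_root v)).-1.

Lemma iterp_eq_None k v : (iterp par k v == None) = (depth v < k).
Proof.
rewrite /depth; case: ex_minnP => [[|m] // /eqP Hm Hmin] /=.
apply/idP/idP => [/Hmin // | Hk]; exact/eqP/(iterp_None_mono Hm).
Qed.

Lemma depth_is_level v : is_level par v (depth v).
Proof.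
case E: (iterp par (depth v) v) => [r|]; last first.
  by move/eqP: E; rewrite iterp_eq_None ltnn.
exists r; split=> //; apply/eqP.
by rewrite -[par r]/(obind par (Some r)) -E -iterpS iterp_eq_None.
Qed.

Lemma is_level_depth v l : is_level par v l -> l = depth v.
Proof.
move=> [r [Hr Pr]]; apply/eqP; rewrite eqn_leq.
have /eqP : iterp par l.+1 v = None by rewrite iterpS Hr.
by rewrite iterp_eq_None ltnS => ->; rewrite leqNgt -iterp_eq_None Hr.
Qed.

Lemma depth_iterp k v u :
  iterp par k v = Some u -> k <= depth v /\ depth u = depth v - k.
Proof.
move=> Hu; have Hk : k <= depth v by rewrite leqNgt -iterp_eq_None Hu.
split=> //; apply/esym/is_level_depth.
have [r [Hr Pr]] := depth_is_level v.
by exists r; rewrite -Hr -{2}(subnK Hk) iterpD Hu.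
Qed.

Definition ancestor v (k : 'I_(depth v).+1) : 'I_n := odflt v (iterp par k v).

Lemma iterp_ancestor v (k : 'I_(depth v).+1) : iterp par k v = Some (ancestor k).
Proof.
have : iterp par k v != None by rewrite iterp_eq_None -leqNgt -ltnS.
by rewrite /ancestor; case: (iterp par k v).
Qed.

Lemma ancestor_inj v : injective (@ancestor v).
Proof.
move=> a b Hab; apply/val_inj.
have [Ha da] := depth_iterp (iterp_ancestor a).
have [Hb db] := depth_iterp (iterp_ancestor b).
by apply/eqP; rewrite -(eqn_sub2lE Ha Hb) -da -db Hab.
Qed.

Lemma depth_lt v : depth v < n.
Proof. by have := leq_card _ (@ancestor_inj v); rewrite !card_ord. Qed.

Lemma reach_ancestor u v :
  reach par u v <-> u \in [set ancestor k | k : 'I_(depth v).+1].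
Proof.
split=> [[k Hk] | /imsetP [k _ ->]]; last by exists k; exact: iterp_ancestor.
have Hkd : k < (depth v).+1 by rewrite ltnS leqNgt -iterp_eq_None Hk.
apply/imsetP; exists (Ordinal Hkd) => //.
by move: (iterp_ancestor (Ordinal Hkd)); rewrite /= Hk => -[].
Qed.

End Branching.

Lemma F2_addrr (x : 'F_2) : (x + x = 0)%R.
Proof. exact/addrr_pchar2/pchar_Fp. Qed.

Lemma F2_natr_odd m : (m%:R : 'F_2)%R = (odd m)%:R%R.
Proof. by rewrite -(Fp_nat_mod (isT : prime 2)) modn2. Qed.

Lemma F2_eq1 (x : 'F_2) : x = (x == 1%R)%:R%R.
Proof. by case: x => [[|[|]] //] Hx; apply/val_inj. Qed.

Lemma count_modn_pred d m : 0 < m -> \sum_(j < d) (j %% m == m.-1) = d %/ m.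
Proof.
move=> m_gt0; elim: d => [|d IH]; first by rewrite big_ord0 div0n.
rewrite big_ord_recr /= IH divnS // addnC; congr (_ + _).
rewrite /dvdn -addn1 -modnDml addn1.
have := ltn_pmod d m_gt0.
case: eqP => [-> _|Hne Hlt]; first by rewrite prednK // modnn.
by rewrite modn_small //; lia.
Qed.

Lemma modnM2_split d p : 0 < p -> d %% (p * 2) = d %% p + odd (d %/ p) * p.
Proof.
move=> p_gt0; have := ltn_pmod d p_gt0.
have Ed : d = (d %/ p)./2 * (p * 2) + (odd (d %/ p) * p + d %% p).
  rewrite {1}(divn_eq d p) -{1}(odd_double_half (d %/ p)).
  move: (odd _) (_./2) (d %% p) => b a r; rewrite -muln2; nia.
rewrite {2}Ed modnMDl; case: (odd _) => /= Hlt; rewrite modn_small; lia.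
Qed.

Lemma modnM2_eq_pred d p : 0 < p ->
  (d %% (p * 2) == (p * 2).-1) = (d %% p == p.-1) && odd (d %/ p).
Proof.
move=> p_gt0; rewrite modnM2_split //; have := ltn_pmod d p_gt0.
by case: (odd _) => /=; lia.
Qed.

Local Open Scope ring_scope.

Section Oracle.

Variables (n : nat) (par : 'I_n -> option 'I_n) (M : 'M['F_2]_n).
Hypothesis par_branching : is_branching par.
Hypothesis M_reach : forall i j : 'I_n, M j i = 1 <-> reach par i j.

Notation depth := (depth par_branching).
Notation ancestor v := (@ancestor _ _ par_branching v).

Lemma mulmx_sum_ancestors (q : 'cV['F_2]_n) v :
  (M *m q) v 0 = \sum_(k < (depth v).+1) q (ancestor v k) 0.
Proof.
rewrite mxE (eq_bigr (fun u => if M v u == 1 then q u 0 else 0)); last first.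
  move=> u _; rewrite {1}(F2_eq1 (M v u)).
  by case: (_ == _); rewrite ?mul1r ?mul0r.
rewrite -big_mkcond.
rewrite (eq_bigl [in [set ancestor v k | k : 'I_(depth v).+1]]) => [|u].
  by rewrite big_imset // => a b _ _; exact: ancestor_inj.
have reachE := reach_ancestor par_branching.
by apply/eqP/idP => [/M_reach/reachE | /reachE/M_reach].
Qed.

Lemma query_depth_indicator (P : pred nat) (q : 'cV['F_2]_n) v :
  (forall u, q u 0 = (P (depth u))%:R) ->
  (M *m q + q) v 0 = (\sum_(j < depth v) P j)%:R.
Proof.
move=> Hq; rewrite mxE mulmx_sum_ancestors big_ord_recl /= addrAC F2_addrr add0r.
rewrite natr_sum -(big_mkord xpredT (fun j => (P j)%:R)) big_rev_mkord subn0.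
apply: eq_bigr => i _; rewrite Hq.
by have [_ ->] := depth_iterp par_branching (iterp_ancestor (lift ord0 i)).
Qed.

Lemma run_invariant i :
  let: (lvl, q, cnt) := run (fun q => M *m q) i in
  [/\ cnt = i, forall v, lvl v = (depth v %% 2 ^ i)%N
    & forall v, q v 0 = ((depth v %% 2 ^ i == (2 ^ i).-1)%N)%:R].
Proof.
elim: i => [|i]; first by split=> // v; rewrite ?ffunE ?mxE modn1.
rewrite /=; case: (run _ i) => [[lvl q] cnt] [-> Hlvl Hq] /=.
have p_gt0 : (0 < 2 ^ i)%N by rewrite expn_gt0.
have Hr v : (M *m q + q) v 0 = (odd (depth v %/ 2 ^ i))%:R.
  rewrite (@query_depth_indicator (fun j => j %% 2 ^ i == (2 ^ i).-1)%N _ _ Hq).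
  by rewrite count_modn_pred // F2_natr_odd.
split=> // v; rewrite ?ffunE 1?[LHS]mxE Hr expnS mulnC.
  by rewrite Hlvl modnM2_split //; case: (odd _); rewrite /= ?mul1n ?addn0.
by rewrite Hq modnM2_eq_pred // -mulnb natrM.
Qed.

End Oracle.

Theorem lemma21 (n : nat) (par : 'I_n -> option 'I_n) (M : 'M['F_2]_n) :
  is_branching par ->
  (forall i j : 'I_n, M j i = 1 <-> reach par i j) ->
  let: (lvl, _, cnt) := run (fun q => M *m q) (up_log 2 n) in
  cnt = up_log 2 n /\ forall v : 'I_n, is_level par v (lvl v).
Proof.
move=> par_branching M_reach.
have := run_invariant par_branching M_reach (up_log 2 n).
case: (run _ _) => [[lvl q] cnt] [-> lvl_depth _]; split=> // v.
have depth_small : (depth par_branching v < 2 ^ up_log 2 n)%N.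
  exact: leq_trans (depth_lt par_branching v) (@up_logP 2 n isT).
by rewrite lvl_depth modn_small //; exact: depth_is_level.
Qed.
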